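(* For every circuit $c\in\mathsf{ACirc}$, $[\![c]\!]_{op}=\kappa(\iota([\![c]\!]))$.
   Context: Fix a field $k$. Circuits: terms built from generators with sorts: copier $\Delta:(1,2)$, discard $!:(1,0)$, amplifier $\mathsf{s}_r:(1,1)$ ($r\in k$), register $\mathsf{x}:(1,1)$, adder $+:(2,1)$, zero $0:(0,1)$, one $\mathbf{1}:(0,1)$; mirror images $\Delta^{op}:(2,1)$, $!^{op}:(0,1)$, $\mathsf{s}_r^{op}$, $\mathsf{x}^{op}:(1,1)$, $+^{op}:(1,2)$, $0^{op}:(1,0)$, $\mathbf{1}^{op}:(1,0)$; $\mathrm{id}_0:(0,0)$, $\mathrm{id}_1:(1,1)$, $\mathrm{sw}:(2,2)$; closed under sequential composition $;$ and parallel composition $\oplus$; $\mathsf{ACirc}$ is the resulting prop (modulo symmetric monoidal laws). Denotation: $k(x)$ is the field of polynomial fractions over $k$; $[\![c]\!]\subseteq k(x)^n\times k(x)^m$ with $[\![\Delta]\!]=\{(p,(p,p))\}$, $[\![!]\!]=\{(p,\bullet)\}$, $[\![+]\!]=\{((p,q),p+q)\}$, $[\![0]\!]=\{(\bullet,0)\}$, $[\![\mathbf 1]\!]=\{(\bullet,1)\}$, $[\![\mathsf s_r]\!]=\{(p,rp)\}$, $[\![\mathsf x]\!]=\{(p,px)\}$; mirrored generators denote converse relations; $\mathrm{id}_1,\mathrm{sw},\mathrm{id}_0$ denote identity, swap, $\{(\bullet,\bullet)\}$; $;$ is relational composition and $\oplus$ product of relations. Each $[\![c]\!]$ is an affine relation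 (empty, or a translate of a $k(x)$-linear subspace). Operational semantics: states are circuits with a value of $k$ in each register; initial state $c_0$ stores $0$. Transitions $t\vdash c\xrightarrow[w]{v}c'$ at time $t\in\mathbb Z$: $\Delta$: $a/(a,a)$; $!$: $a/\bullet$; $+$: $(a,b)/a+b$; $0$: $\bullet/0$; $\mathsf s_r$: $a/ra$; $\mathsf x$ storing $b$: $a/b$, then stores $a$; $\mathbf 1$: $\bullet/1$ if $t=0$, $\bullet/0$ if $t\ne0$; mirrored generators: same with left/right exchanged; $\mathrm{id}_1$: $a/a$; $\mathrm{sw}$: $(a,b)/(b,a)$; $\mathrm{id}_0$: $\bullet/\bullet$; in $c;d$ the components move at the same time agreeing on the shared middle label; in $c\oplus d$ they move at the same time with labels concatenated. A computation starting at $t\le 0$ is a sequence of transitions from $c_0$ at times $t,t+1,\dots$. An $(n,m)$-trajectory is $\sigma:\mathbb Z\to k^n\times k^m$ that is $(0,0)$ for all sufficiently small indices. $[\![c]\!]_{op}$ is the set of trajectories of infinite computations: $\sigma(i)=(u_i,v_i)$ (labels of the transition at time $i$) for $i\ge t$, and $(0,0)$ for $i<t$. Laurent series: $k((x))$ is the field of maps $\alpha:\mathbb Z\to k$ with $\alpha(i)=0$ for all sufficiently small $i$, pointwise sum and convolution product; $k(x)$ embeds in $k((x))$ (a polynomial as its coefficient sequence, fractions via inverses in $k((x))$). $\iota$ sends $\emptyset$ to $\emptyset$ and an affine relation $a+L\subseteq k(x)^n\times k(x)^m$ to the affine relation $a+\mathrm{span}_{k((x))}(L)\subseteq k((x))^n\times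 k((x))^m$ (via the embedding). $\kappa$ sends a pair $(u,v)$, $u=(\alpha^1,\dots,\alpha^n)\in k((x))^n$, $v=(\beta^1,\dots,\beta^m)\in k((x))^m$, to the trajectory $i\mapsto((\alpha^1(i),\dots,\alpha^n(i)),(\beta^1(i),\dots,\beta^m(i)))$, and is extended to sets elementwise. *)

From HB Require Import structures.
From mathcomp Require Import all_boot all_order all_algebra.
From mathcomp Require Import fraction.
From Stdlib Require Import ClassicalEpsilon.
Set Implicit Arguments. Unset Strict Implicit. Unset Printing Implicit Defensive.
Import Order.TTheory GRing.Theory Num.Theory.
Local Open Scope ring_scope.

Inductive circ (k : fieldType) : nat -> nat -> Type :=
| CCopy : circ k 1 2
| CDisc : circ k 1 0
| CAmp (r : k) : circ k 1 1
| CReg : circ k 1 1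
| CAdd : circ k 2 1
| CZero : circ k 0 1
| COne : circ k 0 1
| CCopyOp : circ k 2 1
| CDiscOp : circ k 0 1
| CAmpOp (r : k) : circ k 1 1
| CRegOp : circ k 1 1
| CAddOp : circ k 1 2
| CZeroOp : circ k 1 0
| COneOp : circ k 1 0
| CId0 : circ k 0 0
| CId1 : circ k 1 1
| CSw : circ k 2 2
| CSeq n m l : circ k n m -> circ k m l -> circ k n l
| CPar n1 m1 n2 m2 : circ k n1 m1 -> circ k n2 m2 -> circ k (n1 + n2) (m1 + m2).

Definition kx (k : fieldType) := {fraction {poly k}}.

Definition polyF (k : fieldType) (p : {poly k}) : kx k := FracField.tofrac p.

Definition krel (k : fieldType) n m := 'rV[kx k]_n -> 'rV[kx k]_m -> Prop.

Fixpoint denot (k : fieldType) n m (c : circ k n m) : krel k n m :=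
  match c in circ _ n m return krel k n m with
  | CCopy => fun u v => v = \row_(j < 2) u 0 0
  | CDisc => fun u v => True
  | CAmp r => fun u v => v = polyF r%:P *: u
  | CReg => fun u v => v = polyF 'X *: u
  | CAdd => fun u v => v = \row_(j < 1) (u 0 ord0 + u 0 ord_max)
  | CZero => fun u v => v = 0
  | COne => fun u v => v = const_mx 1
  | CCopyOp => fun u v => u = \row_(j < 2) v 0 0
  | CDiscOp => fun u v => True
  | CAmpOp r => fun u v => u = polyF r%:P *: v
  | CRegOp => fun u v => u = polyF 'X *: v
  | CAddOp => fun u v => u = \row_(j < 1) (v 0 ord0 + v 0 ord_max)
  | CZeroOp => fun u v => u = 0
  | COneOp => fun u v => u = const_mx 1
  | CId0 => fun u v => True
  | CId1 => fun u v => v = u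
  | CSw => fun u v => v = \row_(j < 2) u 0 (rev_ord j)
  | CSeq _ _ _ c d => fun u v => exists w, denot c u w /\ denot d w v
  | CPar _ _ _ _ c d => fun u v =>
      denot c (lsubmx u) (lsubmx v) /\ denot d (rsubmx u) (rsubmx v)
  end.

Fixpoint stateT (k : fieldType) n m (c : circ k n m) : Type :=
  match c with
  | CReg => k
  | CRegOp => k
  | CSeq _ _ _ c d => (stateT c * stateT d)%type
  | CPar _ _ _ _ c d => (stateT c * stateT d)%type
  | _ => unit
  end.

Fixpoint init (k : fieldType) n m (c : circ k n m) : stateT c :=
  match c as c0 in circ _ n m return stateT c0 with
  | CReg => 0
  | CRegOp => 0
  | CSeq _ _ _ c d => (init c, init d)
  | CPar _ _ _ _ c d => (init c, init d)
  | CCopy => tt | CDisc => tt | CAmp _ => tt | CAdd => tt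
  | CZero => tt | COne => tt | CCopyOp => tt | CDiscOp => tt
  | CAmpOp _ => tt | CAddOp => tt | CZeroOp => tt | COneOp => tt
  | CId0 => tt | CId1 => tt | CSw => tt
  end.

Definition one_at (k : fieldType) (t : int) : k := if t == 0 then 1 else 0.

(* step t c s u v s' :  t |- c (state s) --u/v--> c (state s') *)
Fixpoint step (k : fieldType) (t : int) n m (c : circ k n m) :
    stateT c -> 'rV[k]_n -> 'rV[k]_m -> stateT c -> Prop :=
  match c as c0 in circ _ n m
    return stateT c0 -> 'rV[k]_n -> 'rV[k]_m -> stateT c0 -> Prop with
  | CCopy => fun _ u v _ => v = \row_(j < 2) u 0 0
  | CDisc => fun _ u v _ => True
  | CAmp r => fun _ u v _ => v = r *: u
  | CReg => fun b u v b' => v = const_mx b /\ b' = u 0 0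
  | CAdd => fun _ u v _ => v = \row_(j < 1) (u 0 ord0 + u 0 ord_max)
  | CZero => fun _ u v _ => v = 0
  | COne => fun _ u v _ => v = const_mx (one_at k t)
  | CCopyOp => fun _ u v _ => u = \row_(j < 2) v 0 0
  | CDiscOp => fun _ u v _ => True
  | CAmpOp r => fun _ u v _ => u = r *: v
  | CRegOp => fun b u v b' => u = const_mx b /\ b' = v 0 0
  | CAddOp => fun _ u v _ => u = \row_(j < 1) (v 0 ord0 + v 0 ord_max)
  | CZeroOp => fun _ u v _ => u = 0
  | COneOp => fun _ u v _ => u = const_mx (one_at k t)
  | CId0 => fun _ u v _ => True
  | CId1 => fun _ u v _ => v = u
  | CSw => fun _ u v _ => v = \row_(j < 2) u 0 (rev_ord j)
  | CSeq _ _ _ c d => fun s u v s' =>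
      exists w, @step k t _ _ c s.1 u w s'.1 /\ @step k t _ _ d s.2 w v s'.2
  | CPar _ _ _ _ c d => fun s u v s' =>
      @step k t _ _ c s.1 (lsubmx u) (lsubmx v) s'.1 /\
      @step k t _ _ d s.2 (rsubmx u) (rsubmx v) s'.2
  end.

Definition trajectory (k : fieldType) n m := int -> 'rV[k]_n * 'rV[k]_m.

Definition op_sem (k : fieldType) n m (c : circ k n m) (sigma : trajectory k n m)
  : Prop :=
  exists (t : int) (st : int -> stateT c),
    t <= 0 /\ st t = init c /\
    (forall i : int, t <= i -> @step k i _ _ c (st i) (sigma i).1 (sigma i).2 (st (i + 1))) /\
    (forall i : int, i < t -> sigma i = (0, 0)).

Definition laurent (k : fieldType) (a : int -> k) : Prop :=
  exists N : int, forall i : int, i < N -> a i = 0.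

(* a lower bound below which a Laurent series vanishes (0 if none) *)
Definition lbound (k : fieldType) (a : int -> k) : int :=
  match excluded_middle_informative
          (exists N : int, forall i : int, i < N -> a i = 0) with
  | left H => proj1_sig (constructive_indefinite_description _ H)
  | right _ => 0
  end.

Definition ladd (k : fieldType) (a b : int -> k) : int -> k := fun i => a i + b i.

(* convolution product: (a b)(n) = sum_i a(i) b(n - i), a finite sum *)
Definition lmul (k : fieldType) (a b : int -> k) : int -> k := fun n =>
  let la := lbound a in let lb := lbound b in
  \sum_(j < (absz (n - la - lb)%R).+1 | 0 <= n - la - lb)
     a (la + j%:Z) * b (n - la - j%:Z).

Definition pcoef (k : fieldType) (p : {poly k}) : int -> k := fun i =>
  match i with Posz n => p`_n | Negz _ => 0 end.

(* embedding k(x) -> k((x)) (as its graph): f = p/q is sent to the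
   Laurent series e with e * q = p, i.e. p * q^{-1} in k((x)). *)
Definition embR (k : fieldType) (f : kx k) (e : int -> k) : Prop :=
  laurent e /\
  exists p q : {poly k}, q != 0 /\ f = polyF p / polyF q /\
                         lmul e (pcoef q) = pcoef p.

Definition lvec (k : fieldType) n := 'I_n -> int -> k.

Definition embV (k : fieldType) n (a : 'rV[kx k]_n) (e : lvec k n) : Prop :=
  forall j, embR (a 0 j) (e j).

Definition lcomb (k : fieldType) n N (e : lvec k n) (lam : 'I_N -> int -> k)
  (l : 'I_N -> lvec k n) : lvec k n :=
  fun j t => e j t + \sum_(i < N) lmul (lam i) (l i j) t.

(* iota : S = a + L  |->  a + span_{k((x))}(L), and emptyset |-> emptyset.
   Here a is any point of S and L = S - a. *)
Definition iota_rel (k : fieldType) n m (S : krel k n m) :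
    lvec k n -> lvec k m -> Prop := fun u v =>
  exists (a1 : 'rV[kx k]_n) (a2 : 'rV[kx k]_m), S a1 a2 /\
  exists (N : nat) (lam : 'I_N -> int -> k)
         (l1 : 'I_N -> 'rV[kx k]_n) (l2 : 'I_N -> 'rV[kx k]_m),
    (forall i, laurent (lam i)) /\
    (forall i, exists s1 s2, S s1 s2 /\ l1 i = s1 - a1 /\ l2 i = s2 - a2) /\
    exists (e1 : lvec k n) (e2 : lvec k m)
           (f1 : 'I_N -> lvec k n) (f2 : 'I_N -> lvec k m),
      embV a1 e1 /\ embV a2 e2 /\
      (forall i, embV (l1 i) (f1 i)) /\ (forall i, embV (l2 i) (f2 i)) /\
      u = lcomb e1 lam f1 /\ v = lcomb e2 lam f2.

Definition kappa (k : fieldType) n m (u : lvec k n) (v : lvec k m) : trajectory k n m :=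
  fun i => (\row_(j < n) u j i, \row_(j < m) v j i).

Definition kappa_set (k : fieldType) n m (T : lvec k n -> lvec k m -> Prop) :
    trajectory k n m -> Prop :=
  fun sigma => exists u v, T u v /\ sigma = kappa u v.

From HB Require Import structures.
From mathcomp Require Import all_boot all_order all_algebra.
From mathcomp Require Import fraction.
From mathcomp Require Import zify ring.
From mathcomp Require Import boolp.
From Stdlib Require Import ClassicalEpsilon.

(* Both semantics are compared with a third one, [lsem], reading a circuit as a
   relation over the field k((x)) of Laurent series: every generator is the
   graph of a k((x))-affine map or its converse (the register multiplies by x,
   the constant 1 is the series 1), and ; and (+) are relational composition
   and product.

   Denotationally, taking the k((x))-span of an affine relation over k(x)
   commutes with composition and product.  For composition the only issue is
   the middle wire: a k(x)-linear system that is solvable over k((x)) is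
   solvable over k(x), and its k((x))-solutions are a k(x)-solution plus the
   k((x))-span of its k(x)-kernel.

   Operationally, a trajectory that vanishes in the past is the coefficient
   sequence of a unique pair of vectors of Laurent series, and the transition
   rules of each generator, read at every time i, say precisely that the
   coefficients of the output series are those of the image of the input
   series; the register delays by one step, which is multiplication by x. *)

Set Implicit Arguments. Unset Strict Implicit. Unset Printing Implicit Defensive.
Import Order.TTheory GRing.Theory Num.Theory.
Local Open Scope ring_scope.

(** * The field of Laurent series *)

Lemma sum_cond_const (V : nmodType) N (P : bool) (F : 'I_N -> V) :
  \sum_(j < N | P) F j = if P then \sum_(j < N) F j else 0.
Proof. by case: P; rewrite ?big_pred0_eq. Qed.

Lemma coefM_take_polyl (R : nzSemiRingType) (P Q : {poly R}) (M i : nat) :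
  (i < M)%N -> (take_poly M P * Q)`_i = (P * Q)`_i.
Proof.
move=> ltiM; rewrite !coefM; apply: eq_bigr => -[j /= ltji] _.
by rewrite coef_take_poly ifT //; lia.
Qed.

Lemma lt_or_addn (n C : int) : n < C \/ exists i : nat, n = C + i%:Z.
Proof.
by case: (ltrP n C) => h; [left | right; exists (absz (n - C)%R)]; lia.
Qed.

Section LaurentSeries.
Variable k : fieldType.
Implicit Types (a b : int -> k) (A B n : int).

Definition vanish_below a A := forall i, i < A -> a i = 0.

Lemma vanish_below_le a A A' : A' <= A -> vanish_below a A -> vanish_below a A'.
Proof. by move=> le_A'A a0 i ltiA'; apply: a0; lia. Qed.

Lemma lboundP a : laurent a -> vanish_below a (lbound a).
Proof.
rewrite /lbound => a_laurent; case: excluded_middle_informative => // ex.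
by case: constructive_indefinite_description.
Qed.

(* [lmul a b] is [conv_sum] at the chosen bounds [lbound a], [lbound b]; the
   lemmas below show that any bounds below which [a] and [b] vanish will do. *)
Definition conv_sum a b A B n : k :=
  \sum_(j < (absz (n - A - B)%R).+1 | 0 <= n - A - B)
     a (A + j%:Z) * b (n - A - j%:Z).

Lemma conv_sum_predl a b A B n : vanish_below a A ->
  conv_sum a b A B n = conv_sum a b (A - 1) B n.
Proof.
move=> a0; rewrite /conv_sum sum_cond_const [RHS]sum_cond_const.
have -> : n - (A - 1) - B = n - A - B + 1 by ring.
case: (lerP 0 (n - A - B)) => h.
  have -> : 0 <= n - A - B + 1 by lia.
  have -> : absz (n - A - B + 1)%R = (absz (n - A - B)%R).+1 by lia.
  rewrite [RHS]big_ord_recl /= a0 ?mul0r ?add0r; last by rewrite /=; lia.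
  by apply: eq_bigr => j _; congr (a _ * b _); rewrite /bump /=; lia.
case: (lerP 0 (n - A - B + 1)) => h1 //.
have -> : absz (n - A - B + 1)%R = 0%N by lia.
by rewrite big_ord1 a0 ?mul0r //=; lia.
Qed.

Lemma conv_sum_predr a b A B n : vanish_below b B ->
  conv_sum a b A B n = conv_sum a b A (B - 1) n.
Proof.
move=> b0; rewrite /conv_sum sum_cond_const [RHS]sum_cond_const.
have -> : n - A - (B - 1) = n - A - B + 1 by ring.
case: (lerP 0 (n - A - B)) => h.
  have -> : 0 <= n - A - B + 1 by lia.
  have -> : absz (n - A - B + 1)%R = (absz (n - A - B)%R).+1 by lia.
  by rewrite [RHS]big_ord_recr /= b0 ?mulr0 ?addr0 //; lia.
case: (lerP 0 (n - A - B + 1)) => h1 //.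
have -> : absz (n - A - B + 1)%R = 0%N by lia.
by rewrite big_ord1 b0 ?mulr0 //=; lia.
Qed.

Lemma conv_sum_lowerl a b A A' B n : A' <= A -> vanish_below a A ->
  conv_sum a b A B n = conv_sum a b A' B n.
Proof.
move=> le_A'A a0; have [d ->] : exists d : nat, A' = A - d%:Z.
  by exists (absz (A - A')%R); lia.
elim: d => [|d IHd]; first by rewrite subr0.
rewrite IHd (conv_sum_predl _ _ _ (vanish_below_le _ a0)); last by lia.
by congr conv_sum; lia.
Qed.

Lemma conv_sum_lowerr a b A B B' n : B' <= B -> vanish_below b B ->
  conv_sum a b A B n = conv_sum a b A B' n.
Proof.
move=> le_B'B b0; have [d ->] : exists d : nat, B' = B - d%:Z.
  by exists (absz (B - B')%R); lia.
elim: d => [|d IHd]; first by rewrite subr0.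
rewrite IHd (conv_sum_predr _ _ _ (vanish_below_le _ b0)); last by lia.
by congr conv_sum; lia.
Qed.

Lemma vanish_below_laurent a A : vanish_below a A -> laurent a.
Proof. by exists A. Qed.

Lemma lmul_conv_sum a b A B n : vanish_below a A -> vanish_below b B ->
  lmul a b n = conv_sum a b A B n.
Proof.
move=> a0 b0; have la0 := lboundP (vanish_below_laurent a0).
have lb0 := lboundP (vanish_below_laurent b0).
rewrite /lmul -/(conv_sum _ _ _ _ n).
have leA : Num.min A (lbound a) <= A by rewrite ge_min lexx.
have leA' : Num.min A (lbound a) <= lbound a by rewrite ge_min lexx orbT.
have leB : Num.min B (lbound b) <= B by rewrite ge_min lexx.
have leB' : Num.min B (lbound b) <= lbound b by rewrite ge_min lexx orbT.
rewrite (conv_sum_lowerl _ _ _ leA' la0) (conv_sum_lowerr _ _ _ leB' lb0).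
by rewrite (conv_sum_lowerl _ _ _ leA a0) (conv_sum_lowerr _ _ _ leB b0).
Qed.

Lemma lmul_eq0 a b A B n : vanish_below a A -> vanish_below b B ->
  n < A + B -> lmul a b n = 0.
Proof.
move=> a0 b0 h; rewrite (lmul_conv_sum _ a0 b0) /conv_sum sum_cond_const.
by rewrite ifF //; lia.
Qed.

Lemma lmul_vanish_below a b A B : vanish_below a A -> vanish_below b B ->
  vanish_below (lmul a b) (A + B).
Proof. by move=> a0 b0 i; apply: lmul_eq0. Qed.

Definition ltrunc a A (M : nat) : {poly k} := \poly_(j < M) a (A + j%:Z).

Lemma lmul_coefM a b A B (M i : nat) : vanish_below a A -> vanish_below b B ->
  (i < M)%N -> lmul a b (A + B + i%:Z) = (ltrunc a A M * ltrunc b B M)`_i.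
Proof.
move=> a0 b0 ltiM; rewrite (lmul_conv_sum _ a0 b0) /conv_sum sum_cond_const.
rewrite ifT; last by lia.
have -> : absz (A + B + i%:Z - A - B)%R = i by lia.
rewrite coefM; apply: eq_bigr => -[j /= ltji] _; rewrite !coef_poly.
by rewrite ifT ?ifT; [congr (a _ * b _); lia | lia | lia].
Qed.

Lemma laurentD a b : laurent a -> laurent b -> laurent (ladd a b).
Proof.
move=> [A a0] [B b0]; exists (Num.min A B) => i.
by rewrite lt_min => /andP[ltiA ltiB]; rewrite /ladd a0 ?b0 ?addr0.
Qed.

Lemma laurentN a : laurent a -> laurent (fun i => - a i).
Proof. by move=> [A a0]; exists A => i ltiA; rewrite a0 ?oppr0. Qed.

Lemma laurentM a b : laurent a -> laurent b -> laurent (lmul a b).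
Proof. by move=> [A a0] [B b0]; exists (A + B); apply: lmul_vanish_below. Qed.

Lemma pcoef_vanish_below (p : {poly k}) : vanish_below (pcoef p) 0.
Proof. by move=> -[]. Qed.

Lemma laurent_pcoef (p : {poly k}) : laurent (pcoef p).
Proof. exact: vanish_below_laurent (pcoef_vanish_below p). Qed.

Record lseries := LSeries { lcoef :> int -> k ; lcoefP : laurent lcoef }.

Lemma lseries_inj (x y : lseries) : lcoef x = lcoef y -> x = y.
Proof.
case: x y => f f_laurent [g g_laurent] /= eq_fg; subst g.
by rewrite (Prop_irrelevance f_laurent g_laurent).
Qed.

HB.instance Definition _ := gen_eqMixin lseries.
HB.instance Definition _ := gen_choiceMixin lseries.

Definition lseries0 := LSeries (laurent_pcoef 0).
Definition lseries1 := LSeries (laurent_pcoef 1).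
Definition lseries_add (x y : lseries) := LSeries (laurentD (lcoefP x) (lcoefP y)).
Definition lseries_opp (x : lseries) := LSeries (laurentN (lcoefP x)).
Definition lseries_mul (x y : lseries) := LSeries (laurentM (lcoefP x) (lcoefP y)).

Lemma lseries_addA : associative lseries_add.
Proof. by move=> x y z; apply/lseries_inj/funext => i; apply: addrA. Qed.

Lemma lseries_addC : commutative lseries_add.
Proof. by move=> x y; apply/lseries_inj/funext => i; apply: addrC. Qed.

Lemma lseries_add0 : left_id lseries0 lseries_add.
Proof.
by move=> x; apply/lseries_inj/funext => -[i|i]; rewrite /= /ladd /= ?coef0 add0r.
Qed.

Lemma lseries_addN : left_inverse lseries0 lseries_opp lseries_add.
Proof.
by move=> x; apply/lseries_inj/funext => -[i|i]; rewrite /= /ladd /= ?coef0 addNr.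
Qed.

HB.instance Definition _ :=
  GRing.isZmodule.Build lseries lseries_addA lseries_addC lseries_add0 lseries_addN.

Lemma ltrunc_lmul a b A B M : vanish_below a A -> vanish_below b B ->
  ltrunc (lmul a b) (A + B) M = take_poly M (ltrunc a A M * ltrunc b B M).
Proof.
move=> a0 b0; apply/polyP => i; rewrite coef_take_poly coef_poly.
by case: ltnP => // ltiM; apply: lmul_coefM.
Qed.

Lemma ltrunc_pcoef (p : {poly k}) M : (size p <= M)%N -> ltrunc (pcoef p) 0 M = p.
Proof.
move=> le_pM; apply/polyP => i; rewrite coef_poly add0r.
by case: ltnP => // le_Mi; rewrite nth_default //; apply: leq_trans le_Mi.
Qed.

Lemma lseries_mulA : associative lseries_mul.
Proof.
move=> x y z; apply/lseries_inj/funext => n /=.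
have [A x0] := lcoefP x; have [B y0] := lcoefP y; have [C z0] := lcoefP z.
have xy0 := lmul_vanish_below x0 y0; have yz0 := lmul_vanish_below y0 z0.
have [ltn|[i ->]] := lt_or_addn n (A + (B + C)).
  by rewrite (lmul_eq0 x0 yz0) ?(lmul_eq0 xy0 z0) // -addrA.
rewrite (lmul_coefM (M := i.+1) x0 yz0) // addrA (lmul_coefM (M := i.+1) xy0 z0) //.
rewrite (ltrunc_lmul _ x0 y0) (ltrunc_lmul _ y0 z0).
by rewrite coefM_take_polyl // mulrC coefM_take_polyl // mulrC mulrA.
Qed.

Lemma lseries_mulC : commutative lseries_mul.
Proof.
move=> x y; apply/lseries_inj/funext => n /=.
have [A x0] := lcoefP x; have [B y0] := lcoefP y.
have [ltn|[i ->]] := lt_or_addn n (A + B).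
  by rewrite (lmul_eq0 x0 y0) ?(lmul_eq0 y0 x0) // addrC.
rewrite (lmul_coefM (M := i.+1) x0 y0) // (addrC A) (lmul_coefM (M := i.+1) y0 x0) //.
by rewrite mulrC.
Qed.

Lemma lseries_mul1 : left_id lseries1 lseries_mul.
Proof.
move=> x; apply/lseries_inj/funext => n /=.
have [B x0] := lcoefP x; have one0 := pcoef_vanish_below (1 : {poly k}).
have [ltn|[i ->]] := lt_or_addn n B; first by rewrite (lmul_eq0 one0 x0) ?x0 ?add0r.
rewrite -(add0r B) (lmul_coefM (M := i.+1) one0 x0) // ltrunc_pcoef ?size_poly1 //.
by rewrite mul1r coef_poly ltnSn add0r.
Qed.

Lemma lseries_mulDl : left_distributive lseries_mul lseries_add.
Proof.
move=> x y z; apply/lseries_inj/funext => n /=.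
have [A x0] := lcoefP x; have [B y0] := lcoefP y; have [C z0] := lcoefP z.
have x0' : vanish_below x (Num.min A B) by apply: vanish_below_le x0; rewrite ge_min lexx.
have y0' : vanish_below y (Num.min A B).
  by apply: vanish_below_le y0; rewrite ge_min lexx orbT.
have xy0 : vanish_below (ladd x y) (Num.min A B) by move=> i lti; rewrite /ladd x0' ?y0' ?addr0.
rewrite /ladd (lmul_conv_sum _ xy0 z0) (lmul_conv_sum _ x0' z0) (lmul_conv_sum _ y0' z0).
rewrite /conv_sum; case: (boolP (0 <= _)) => _; last by rewrite !big_pred0_eq addr0.
by rewrite -big_split; apply: eq_bigr => j _; rewrite /ladd mulrDl.
Qed.

Lemma lseries1_neq0 : lseries1 != lseries0.
Proof.
apply/eqP => /(congr1 (fun x : lseries => x 0)) /=.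
by rewrite coef1 coef0 => /eqP; rewrite oner_eq0.
Qed.

HB.instance Definition _ := GRing.Zmodule_isComNzRing.Build lseries
  lseries_mulA lseries_mulC lseries_mul1 lseries_mulDl lseries1_neq0.

Lemma lcoef0 i : (0 : lseries) i = 0.
Proof. by case: i => i; rewrite /= ?coef0. Qed.

Section PowerSeriesInverse.
Variable f : nat -> k.

(* The [n]-th coefficient of [1 / f], computed correctly whenever [n < fuel];
   the fuel only makes the course-of-values recursion structural. *)
Fixpoint inv_coef_fuel (fuel n : nat) : k :=
  if fuel is fuel'.+1 then
    if n is 0 then (f 0)^-1
    else - (f 0)^-1 * \sum_(j < n) inv_coef_fuel fuel' j * f (n - j)%N
  else 0.

Lemma inv_coef_fuel_stable (fuel1 fuel2 n : nat) : (n < fuel1)%N -> (n < fuel2)%N ->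
  inv_coef_fuel fuel1 n = inv_coef_fuel fuel2 n.
Proof.
elim: fuel1 fuel2 n => [|fuel1 IH] [|fuel2] [|n] //= lt1 lt2.
by congr (_ * _); apply: eq_bigr => -[j ltjn] _; congr (_ * _); apply: IH => /=; lia.
Qed.

Definition inv_coef (n : nat) := inv_coef_fuel n.+1 n.

Lemma inv_coefP (n : nat) : f 0 != 0 ->
  \sum_(j < n.+1) inv_coef j * f (n - j)%N = (n == 0)%:R.
Proof.
move=> f0; case: n => [|n]; first by rewrite big_ord1 /inv_coef /= mulVf.
rewrite big_ord_recr /= /inv_coef /= subnn.
have -> : \sum_(j < n.+1) inv_coef_fuel j.+1 j * f (n.+1 - j)%N =
          \sum_(j < n.+1) inv_coef_fuel n.+1 j * f (n.+1 - j)%N.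
  by apply: eq_bigr => j _; rewrite (@inv_coef_fuel_stable j.+1 n.+1).
by rewrite mulrAC mulNr mulVf // mulN1r subrr.
Qed.

End PowerSeriesInverse.

Lemma lseries_valuation (x : lseries) : x != 0 ->
  exists v, x v != 0 /\ vanish_below x v.
Proof.
move=> x_neq0; have [A x0] := lcoefP x.
have [i xi_neq0] : exists i, x i != 0.
  apply: contrapT => all0; move/eqP: x_neq0; apply; apply/lseries_inj/funext => i.
  by rewrite lcoef0; apply: contrapT => /eqP xi_neq0; apply: all0; exists i.
have ex : exists m : nat, x (A + m%:Z) != 0.
  exists (absz (i - A)%R); case: (ltrP i A) => ltiA; first by rewrite x0 ?eqxx in xi_neq0.
  by have -> : A + (absz (i - A)%R)%:Z = i by lia.
case: (ex_minnP ex) => m xm_neq0 m_min; exists (A + m%:Z); split => // j ltj.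
case: (ltrP j A) => ltjA; first exact: x0.
apply/eqP; apply: contraTT ltj => xj_neq0; rewrite -leNgt.
have eqj : A + (absz (j - A)%R)%:Z = j by lia.
by have := m_min (absz (j - A)%R); rewrite eqj => /(_ xj_neq0); lia.
Qed.

Lemma lseries_inv_exists (x : lseries) : x != 0 -> exists y, y * x = 1.
Proof.
move=> /lseries_valuation [v [xv_neq0 x0]].
pose f (j : nat) := x (v + j%:Z).
pose y i := if - v <= i then inv_coef f (absz (i + v)%R) else 0.
have y0 : vanish_below y (- v) by move=> i lti; rewrite /y ifF //; lia.
exists (LSeries (vanish_below_laurent y0)); apply/lseries_inj/funext => n /=.
rewrite (lmul_conv_sum _ y0 x0) /conv_sum sum_cond_const.
have -> : n - - v - v = n by ring.
case: n => [n|n] //=; rewrite coef1 -(inv_coefP n (_ : f 0%N != 0)); last by rewrite /f addr0.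
apply: eq_bigr => -[j ltjn] _ /=; rewrite /y ifT; last by lia.
by congr (inv_coef f _ * x _); lia.
Qed.

Definition lseries_inv (x : lseries) : lseries :=
  if pselect (exists y, y * x = 1) is left ex then sval (cid ex) else 0.

Lemma lseries_mulV (x : lseries) : x != 0 -> lseries_inv x * x = 1.
Proof.
move=> /lseries_inv_exists ex; rewrite /lseries_inv.
by case: pselect => // ex'; case: cid.
Qed.

Lemma lseries_inv0 : lseries_inv 0 = 0.
Proof.
rewrite /lseries_inv; case: pselect => // ex; exfalso.
by case: ex => y; rewrite mulr0 => /eqP; rewrite eq_sym oner_eq0.
Qed.

HB.instance Definition _ := GRing.ComNzRing_isField.Build lseries
  lseries_mulV lseries_inv0.

End LaurentSeries.

(** * Extending a ring embedding to the field of fractions *)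

Local Notation "x %:F" := (@FracField.tofrac _ x).

Lemma pi_fractionE (R : idomainType) (r : {ratio R}) :
  (\pi_({fraction R}) r)%qT = (\n_r)%:F / (\d_r)%:F.
Proof.
rewrite -[RHS]/(FracField.mul _ _); unlock FracField.tofrac.
rewrite -[GRing.inv _]/(FracField.inv _) !piE.
apply/eqmodP; rewrite /= FracField.equivfE /FracField.mulf /FracField.invf.
have d_neq0 := denom_ratioP r.
rewrite !numden_Ratio ?oner_eq0 ?mulf_neq0 ?oner_eq0 //.
by rewrite !mulr1 !mul1r mulrC.
Qed.

Lemma fractionE (R : idomainType) (x : {fraction R}) :
  x = (\n_(repr x))%:F / (\d_(repr x))%:F.
Proof. by rewrite -pi_fractionE reprK. Qed.

Section FractionLift.
Variables (R : idomainType) (F : fieldType) (f : {rmorphism R -> F}).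
Hypothesis f_inj : injective f.

(* The injectivity proof is an argument so that the morphism instances declared
   below are still found for [frac_lift f_inj] once the section is closed. *)
Definition frac_lift of injective f := fun x : {fraction R} =>
  f \n_(repr x) / f \d_(repr x).
Local Notation lift := (frac_lift f_inj).

Lemma frac_liftE p q : q != 0 -> lift (p%:F / q%:F) = f p / f q.
Proof.
move=> q_neq0; rewrite /frac_lift; set r := repr _.
have /eqP : p%:F / q%:F = (\n_r)%:F / (\d_r)%:F by rewrite -fractionE.
rewrite eqr_div ?tofrac_eq0 ?denom_ratioP // -!rmorphM /= tofrac_eq => /eqP eq_pq.
apply/eqP; rewrite eqr_div ?(raddf_eq0 _ f_inj) ?denom_ratioP // -!rmorphM /=.
by rewrite -eq_pq.
Qed.

Lemma frac_lift_tofrac p : lift p%:F = f p.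
Proof.
by rewrite -[p%:F]divr1 -tofrac1 frac_liftE ?oner_neq0 // rmorph1 divr1.
Qed.

Lemma frac_lift_is_zmod_morphism : zmod_morphism lift.
Proof.
move=> x y; rewrite [x]fractionE [y]fractionE; move: (repr x) (repr y) => r s.
have [r0 s0] := (denom_ratioP r, denom_ratioP s).
have -> : (\n_r)%:F / (\d_r)%:F - (\n_s)%:F / (\d_s)%:F =
          (\n_r * \d_s - \n_s * \d_r)%:F / (\d_r * \d_s)%:F.
  by rewrite rmorphB !rmorphM -!mulNr addf_div ?tofrac_eq0.
rewrite !frac_liftE ?mulf_neq0 // rmorphB !rmorphM /=.
by rewrite -[in RHS]mulNr addf_div ?(raddf_eq0 _ f_inj) // mulNr.
Qed.

Lemma frac_lift_is_monoid_morphism : monoid_morphism lift.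
Proof.
split; first by rewrite -tofrac1 frac_lift_tofrac rmorph1.
move=> x y; rewrite [x]fractionE [y]fractionE; move: (repr x) (repr y) => r s.
have [r0 s0] := (denom_ratioP r, denom_ratioP s).
rewrite mulf_div -!rmorphM !frac_liftE ?mulf_neq0 //.
by rewrite !rmorphM mulf_div.
Qed.

HB.instance Definition _ :=
  GRing.isZmodMorphism.Build _ _ lift frac_lift_is_zmod_morphism.
HB.instance Definition _ :=
  GRing.isMonoidMorphism.Build _ _ lift frac_lift_is_monoid_morphism.

End FractionLift.

Section LaurentEmbedding.
Variable k : fieldType.
Local Notation L := (lseries k).

Definition pseries (p : {poly k}) : L := LSeries (laurent_pcoef p).

Lemma pseries_is_zmod_morphism : zmod_morphism pseries.
Proof.
move=> p q; apply/lseries_inj/funext => -[n|n] /=; last by rewrite /ladd oppr0 addr0.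
by rewrite /ladd /= coefB.
Qed.

Lemma pseries_is_monoid_morphism : monoid_morphism pseries.
Proof.
split => // p q; apply/lseries_inj/funext => n /=.
have [p0 q0] := (pcoef_vanish_below p, pcoef_vanish_below q).
have [ltn|[m ->]] := lt_or_addn n (0 + 0); first by rewrite (lmul_eq0 p0 q0) //; case: n ltn.
pose M := maxn m.+1 (maxn (size p) (size q)).
rewrite (lmul_coefM (M := M) p0 q0) ?leq_max ?ltnSn // !ltrunc_pcoef //;
  by rewrite /M !leq_max leqnn ?orbT.
Qed.

HB.instance Definition _ :=
  GRing.isZmodMorphism.Build _ _ pseries pseries_is_zmod_morphism.
HB.instance Definition _ :=
  GRing.isMonoidMorphism.Build _ _ pseries pseries_is_monoid_morphism.

Lemma pseries_inj : injective pseries.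
Proof.
apply: raddf_inj => p /(congr1 (@lcoef k)) p0; apply/polyP => i.
by have /= := congr1 (fun g => g i%:Z) p0; rewrite coef0.
Qed.

Definition lseries_of : kx k -> L := frac_lift pseries_inj.

Lemma embR_lseries_of (f : kx k) (e : int -> k) : embR f e <-> e = lseries_of f.
Proof.
split=> [[e_laurent [p [q [q_neq0 [-> eq_eqp]]]]] | ->].
  have -> : e = LSeries e_laurent by [].
  have eq_pq : LSeries e_laurent * pseries q = pseries p by apply: lseries_inj.
  have pq_neq0 : pseries q != 0 by rewrite (raddf_eq0 _ pseries_inj) ?denom_ratioP.
  rewrite /lseries_of /polyF frac_liftE //.
  by congr lcoef; exact: canRL (mulfK pq_neq0) eq_pq.
split; first exact: lcoefP.
exists \n_(repr f), \d_(repr f); split; first exact: denom_ratioP.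
split; first exact: fractionE.
have eq_nd : lseries_of f * pseries \d_(repr f) = pseries \n_(repr f).
  have d_neq0 : pseries \d_(repr f) != 0 by rewrite (raddf_eq0 _ pseries_inj) ?denom_ratioP.
  rewrite {1}[f]fractionE /lseries_of frac_liftE ?denom_ratioP //.
  exact: divfK.
exact (congr1 (@lcoef k) eq_nd).
Qed.

End LaurentEmbedding.

Arguments lseries_of {k}.

(** * Spans of affine relations along a field embedding *)

Definition rel_mx (R : Type) n m := 'rV[R]_n -> 'rV[R]_m -> Prop.

Definition rel_flip (R : Type) n m (S : rel_mx R n m) : rel_mx R m n :=
  fun y x => S x y.

Definition rel_seq (R : Type) n m l (S : rel_mx R n m) (T : rel_mx R m l) :
  rel_mx R n l := fun u v => exists w, S u w /\ T w v.

Definition rel_par (R : Type) n1 m1 n2 m2 (S : rel_mx R n1 m1)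
  (T : rel_mx R n2 m2) : rel_mx R (n1 + n2) (m1 + m2) :=
  fun u v => S (lsubmx u) (lsubmx v) /\ T (rsubmx u) (rsubmx v).

Lemma row_lsubmx (R : Type) m n1 n2 i (A : 'M[R]_(m, n1 + n2)) :
  row i (lsubmx A) = lsubmx (row i A).
Proof. by apply/rowP => j; rewrite !mxE. Qed.

Lemma row_rsubmx (R : Type) m n1 n2 i (A : 'M[R]_(m, n1 + n2)) :
  row i (rsubmx A) = rsubmx (row i A).
Proof. by apply/rowP => j; rewrite !mxE. Qed.

Lemma lsubmx_affine (R : pzRingType) m n1 n2 (t : R) (A B C : 'M[R]_(m, n1 + n2)) :
  lsubmx (A + t *: (B - C)) = lsubmx A + t *: (lsubmx B - lsubmx C).
Proof. by apply/matrixP => i j; rewrite !mxE. Qed.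

Lemma rsubmx_affine (R : pzRingType) m n1 n2 (t : R) (A B C : 'M[R]_(m, n1 + n2)) :
  rsubmx (A + t *: (B - C)) = rsubmx A + t *: (rsubmx B - rsubmx C).
Proof. by apply/matrixP => i j; rewrite !mxE. Qed.

Section AffineExtension.
Variables (K L : fieldType) (phi : {rmorphism K -> L}).
Local Notation "A ^phi" := (map_mx phi A) (at level 8, format "A ^phi").

Definition affine_closed n m (S : rel_mx K n m) : Prop :=
  forall x1 y1 x2 y2 x3 y3 (t : K), S x1 y1 -> S x2 y2 -> S x3 y3 ->
    S (x1 + t *: (x2 - x3)) (y1 + t *: (y2 - y3)).

(* The set a + span_L (S - a) for a point a = (a1, a2) of S: the rows of [D1]
   and [D2] are directions s - a with s in S. *)
Definition affine_ext n m (S : rel_mx K n m) (U : 'rV[L]_n) (V : 'rV[L]_m) :=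
  exists a1 a2, S a1 a2 /\
  exists N (D1 : 'M[K]_(N, n)) (D2 : 'M[K]_(N, m)) (lam : 'rV[L]_N),
    (forall i, S (a1 + row i D1) (a2 + row i D2)) /\
    U = a1^phi + lam *m D1^phi /\ V = a2^phi + lam *m D2^phi.

Lemma affine_ext_flip n m (S : rel_mx K n m) U V :
  affine_ext S U V <-> affine_ext (rel_flip S) V U.
Proof.
by split=> -[a1 [a2 [Sa [N [D1 [D2 [lam [SD [-> ->]]]]]]]]];
  exists a2, a1; split => //; exists N, D2, D1, lam.
Qed.

Lemma affine_closed_flip n m (S : rel_mx K n m) :
  affine_closed S -> affine_closed (rel_flip S).
Proof. by move=> S_aff x1 y1 x2 y2 x3 y3 t S1 S2 S3; apply: S_aff. Qed.

Lemma affine_closed_comb n m (S : rel_mx K n m) a1 a2 N (D1 : 'M[K]_(N, n))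
    (D2 : 'M[K]_(N, m)) :
  affine_closed S -> S a1 a2 -> (forall i, S (a1 + row i D1) (a2 + row i D2)) ->
  forall rho : 'rV[K]_N, S (a1 + rho *m D1) (a2 + rho *m D2).
Proof.
move=> S_aff Sa SD rho; rewrite !mulmx_sum_row.
apply: (big_ind2 (fun x y => S (a1 + x) (a2 + y))); first by rewrite !addr0.
  move=> x1 x2 y1 y2 S1 S2; have := S_aff _ _ _ _ _ _ 1 S1 S2 Sa.
  by rewrite !scale1r (addrC a1 y1) (addrC a2 y2) !addrK -!addrA.
move=> i _; have := S_aff _ _ _ _ _ _ (rho 0 i) Sa (SD i) Sa.
by rewrite (addrC a1 (row i D1)) (addrC a2 (row i D2)) !addrK.
Qed.

Lemma map_mx_solution N m (D : 'M[K]_(N, m)) (c : 'rV[K]_m) (y : 'rV[L]_N) :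
  y *m D^phi = c^phi ->
  exists2 y0 : 'rV[K]_N, y0 *m D = c & exists nu, y = y0^phi + nu *m (kermx D)^phi.
Proof.
move=> yD; have /submxP [y0 y0D] : (c <= D)%MS by rewrite -(map_submx phi); apply/submxP; exists y.
exists y0 => //.
have /submxP [nu nuD] : (y - y0^phi <= kermx D^phi)%MS.
  by apply/sub_kermxP; rewrite mulmxBl yD -map_mxM -y0D subrr.
by exists nu; rewrite map_kermx -nuD addrC subrK.
Qed.

Lemma affine_closed_seq n m l (S : rel_mx K n m) (T : rel_mx K m l) :
  affine_closed S -> affine_closed T -> affine_closed (rel_seq S T).
Proof.
move=> S_aff T_aff x1 y1 x2 y2 x3 y3 t [w1 [S1 T1]] [w2 [S2 T2]] [w3 [S3 T3]].
by exists (w1 + t *: (w2 - w3)); split; [apply: S_aff | apply: T_aff].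
Qed.

Lemma affine_closed_par n1 m1 n2 m2 (S : rel_mx K n1 m1) (T : rel_mx K n2 m2) :
  affine_closed S -> affine_closed T -> affine_closed (rel_par S T).
Proof.
move=> S_aff T_aff x1 y1 x2 y2 x3 y3 t [S1 T1] [S2 T2] [S3 T3].
by split; rewrite ?lsubmx_affine ?rsubmx_affine; [apply: S_aff | apply: T_aff].
Qed.

Lemma affine_ext_par n1 m1 n2 m2 (S : rel_mx K n1 m1) (T : rel_mx K n2 m2) U V :
  affine_ext (rel_par S T) U V <->
  affine_ext S (lsubmx U) (lsubmx V) /\ affine_ext T (rsubmx U) (rsubmx V).
Proof.
split=> [[a1 [a2 [[Sa Ta] [N [D1 [D2 [lam [SD [-> ->]]]]]]]]] |
         [[a1 [a2 [Sa [N [D1 [D2 [lam [SD [eqU eqV]]]]]]]]]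
          [b1 [b2 [Tb [M [E1 [E2 [mu [TE [eqU' eqV']]]]]]]]]]].
  split.
    exists (lsubmx a1), (lsubmx a2); split => //.
    exists N, (lsubmx D1), (lsubmx D2), lam; split.
      by move=> i; rewrite !row_lsubmx -!raddfD; case: (SD i).
    by rewrite !raddfD /= -!mulmx_lsub -!map_lsubmx.
  exists (rsubmx a1), (rsubmx a2); split => //.
  exists N, (rsubmx D1), (rsubmx D2), lam; split.
    by move=> i; rewrite !row_rsubmx -!raddfD; case: (SD i).
  by rewrite !raddfD /= -!mulmx_rsub -!map_rsubmx.
exists (row_mx a1 b1), (row_mx a2 b2); split; first by rewrite /rel_par !row_mxKl !row_mxKr.
exists (N + M)%N, (col_mx (row_mx D1 0) (row_mx 0 E1)),
  (col_mx (row_mx D2 0) (row_mx 0 E2)), (row_mx lam mu); split.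
  move=> i; case: (split_ordP i) => j ->; rewrite ?rowKu ?rowKd !row_row_mx !row0;
    by rewrite !add_row_mx !addr0 /rel_par !row_mxKl !row_mxKr.
split; [rewrite -[U]hsubmxK eqU eqU' | rewrite -[V]hsubmxK eqV eqV'];
  rewrite !map_row_mx map_col_mx !map_row_mx !map_mx0 mul_row_col !mul_mx_row !mulmx0;
  by rewrite !add_row_mx !addr0 !add0r.
Qed.

Lemma affine_ext_seq_split n m l (S : rel_mx K n m) (T : rel_mx K m l) U V :
  affine_ext (rel_seq S T) U V -> exists W, affine_ext S U W /\ affine_ext T W V.
Proof.
move=> [a1 [a2 [[a [Sa Ta]] [N [D1 [D2 [lam [SD [-> ->]]]]]]]]].
have mid i : {w | S (a1 + row i D1) w /\ T w (a2 + row i D2)} by apply: cid; exact: SD.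
pose Dm := \matrix_(i < N) (sval (mid i) - a).
have Dm_rows i : a + row i Dm = sval (mid i) by rewrite rowK addrC subrK.
exists (a^phi + lam *m Dm^phi); split.
  exists a1, a; split => //; exists N, D1, Dm, lam; split => // i.
  by rewrite Dm_rows; case: (svalP (mid i)).
exists a, a2; split => //; exists N, Dm, D2, lam; split => // i.
by rewrite Dm_rows; case: (svalP (mid i)).
Qed.

Lemma affine_ext_seq_join n m l (S : rel_mx K n m) (T : rel_mx K m l) U W V :
  affine_closed S -> affine_closed T ->
  affine_ext S U W -> affine_ext T W V -> affine_ext (rel_seq S T) U V.
Proof.
move=> S_aff T_aff [a1 [a2 [Sa [N [D1 [D2 [lam [SD [-> eqW]]]]]]]]]
  [b1 [b2 [Tb [M [E1 [E2 [mu [TE [eqW' ->]]]]]]]]].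
(* The middle wire: [a2 + lam D2 = b1 + mu E1], a linear system in [(lam, mu)]. *)
pose D := col_mx D2 (- E1).
have mid_sol z : z *m D = b1 - a2 ->
    rel_seq S T (a1 + lsubmx z *m D1) (b2 + rsubmx z *m E2).
  rewrite -[z]hsubmxK mul_row_col mulmxN row_mxKl row_mxKr => zD.
  exists (a2 + lsubmx z *m D2); split; first exact: affine_closed_comb.
  have -> : a2 + lsubmx z *m D2 = b1 + rsubmx z *m E1.
    by rewrite -(subrK a2 b1) -zD addrAC subrK [RHS]addrC.
  exact: affine_closed_comb.
have : row_mx lam mu *m D^phi = (b1 - a2)^phi.
  rewrite map_col_mx mul_row_col map_mxN mulmxN map_mxB.
  have e : b1^phi + mu *m E1^phi = a2^phi + lam *m D2^phi by rewrite -eqW -eqW'.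
  by apply/eqP; rewrite subr_eq addrAC eq_sym subr_eq e addrC.
move=> /map_mx_solution [y0 y0D [nu eq_lam_mu]].
exists (a1 + lsubmx y0 *m D1), (b2 + rsubmx y0 *m E2); split; first exact: mid_sol.
exists (N + M)%N, (lsubmx (kermx D) *m D1), (rsubmx (kermx D) *m E2), nu; split.
  move=> i; rewrite !row_mul !row_lsubmx !row_rsubmx -!addrA -!mulmxDl -!raddfD.
  by apply: mid_sol; rewrite mulmxDl y0D /= -row_mul mulmx_ker row0 addr0.
have -> : lam = (lsubmx y0)^phi + nu *m (lsubmx (kermx D))^phi.
  by rewrite -[lam](row_mxKl lam mu) eq_lam_mu raddfD /= -mulmx_lsub !map_lsubmx.
have -> : mu = (rsubmx y0)^phi + nu *m (rsubmx (kermx D))^phi.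
  by rewrite -[mu](row_mxKr lam mu) eq_lam_mu raddfD /= -mulmx_rsub !map_rsubmx.
by split; rewrite !map_mxD !map_mxM mulmxDl mulmxA addrA.
Qed.

Definition affine_span n m (S : rel_mx K n m) (R : rel_mx L n m) :=
  affine_closed S /\ forall U V, affine_ext S U V <-> R U V.

Lemma affine_span_graph n m (S : rel_mx K n m) (M : 'M[K]_(n, m)) (c : 'rV[K]_m) :
  (forall u v, S u v <-> v = u *m M + c) ->
  affine_span S (fun U V => V = U *m M^phi + c^phi).
Proof.
move=> S_graph; split.
  move=> x1 y1 x2 y2 x3 y3 t /S_graph -> /S_graph -> /S_graph ->; apply/S_graph.
  have -> : x2 *m M + c - (x3 *m M + c) = (x2 - x3) *m M.
    by rewrite mulmxBl opprD addrACA subrr addr0.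
  by rewrite [in RHS]mulmxDl -scalemxAl addrAC.
move=> U V; split=> [[a1 [a2 [/S_graph Sa [N [D1 [D2 [lam [SD [-> ->]]]]]]]]] | ->].
  have -> : D2 = D1 *m M.
    apply/row_matrixP => i; rewrite row_mul; apply: (addrI (a1 *m M + c)).
    by have /S_graph := SD i; rewrite Sa mulmxDl => ->; rewrite addrAC.
  by rewrite Sa !map_mxD !map_mxM mulmxDl mulmxA addrAC.
exists 0, c; split; first by apply/S_graph; rewrite mul0mx add0r.
exists n, 1%:M, M, U; split.
  by move=> i; apply/S_graph; rewrite add0r -row_mul mul1mx addrC.
by rewrite map_mx0 add0r map_mx1 mulmx1 addrC.
Qed.

Lemma affine_span_flip n m (S : rel_mx K n m) (R : rel_mx L n m) :
  affine_span S R -> affine_span (rel_flip S) (rel_flip R).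
Proof.
move=> [S_aff SR]; split; first exact: affine_closed_flip.
by move=> V U; rewrite -affine_ext_flip; apply: SR.
Qed.

Lemma affine_span_seq n m l (S : rel_mx K n m) (T : rel_mx K m l) R Q :
  affine_span S R -> affine_span T Q -> affine_span (rel_seq S T) (rel_seq R Q).
Proof.
move=> [S_aff SR] [T_aff TQ]; split; first exact: affine_closed_seq.
move=> U V; split=> [/affine_ext_seq_split [W [SW TW]] | [W [RW QW]]].
  by exists W; split; [apply/SR | apply/TQ].
by apply: (affine_ext_seq_join S_aff T_aff (W := W)); [apply/SR | apply/TQ].
Qed.

Lemma affine_span_par n1 m1 n2 m2 (S : rel_mx K n1 m1) (T : rel_mx K n2 m2) R Q :
  affine_span S R -> affine_span T Q -> affine_span (rel_par S T) (rel_par R Q).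
Proof.
move=> [S_aff SR] [T_aff TQ]; split; first exact: affine_closed_par.
move=> U V; rewrite affine_ext_par.
by split=> -[ST1 ST2]; split; by [apply/SR | apply/TQ].
Qed.

End AffineExtension.

(** * Circuits as relations over Laurent series *)

Definition swap_mx (R : pzSemiRingType) : 'M[R]_2 := \matrix_(i, j) (i == rev_ord j)%:R.

Lemma copy_mxE (R : pzSemiRingType) (u : 'rV[R]_1) :
  \row_(j < 2) u 0 0 = u *m const_mx 1.
Proof. by apply/rowP => j; rewrite !mxE big_ord1 !mxE mulr1. Qed.

Lemma add_mxE (R : pzSemiRingType) (u : 'rV[R]_2) :
  \row_(j < 1) (u 0 ord0 + u 0 ord_max) = u *m const_mx 1.
Proof.
apply/rowP => j; rewrite !mxE !big_ord_recl big_ord0 !mxE !mulr1 addr0.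
by congr (u 0 _ + u 0 _); apply: val_inj.
Qed.

Lemma swap_mxE (R : pzSemiRingType) (u : 'rV[R]_2) :
  \row_(j < 2) u 0 (rev_ord j) = u *m swap_mx R.
Proof.
apply/rowP => -[[|[|j]] ltj2] //; rewrite !mxE !big_ord_recl big_ord0 !mxE addr0 /=.
  by rewrite mulr0 add0r mulr1; congr (u 0 _); apply: val_inj.
by rewrite mulr0 addr0 mulr1; congr (u 0 _); apply: val_inj.
Qed.

Lemma map_swap_mx (R S : pzSemiRingType) (f : {rmorphism R -> S}) :
  map_mx f (swap_mx R) = swap_mx S.
Proof. by apply/matrixP => i j; rewrite !mxE rmorph_nat. Qed.

Section CircuitSeries.
Variable k : fieldType.
Local Notation L := (lseries k).
Local Notation K := (kx k).

Definition kx_const (a : k) : K := polyF a%:P.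

Lemma kx_const_is_zmod_morphism : zmod_morphism kx_const.
Proof. by move=> a b; rewrite /kx_const polyCB /polyF rmorphB. Qed.

Lemma kx_const_is_monoid_morphism : monoid_morphism kx_const.
Proof. by split=> [|a b]; rewrite /kx_const ?polyCM /polyF ?rmorph1 ?rmorphM. Qed.

HB.instance Definition _ :=
  GRing.isZmodMorphism.Build _ _ kx_const kx_const_is_zmod_morphism.
HB.instance Definition _ :=
  GRing.isMonoidMorphism.Build _ _ kx_const kx_const_is_monoid_morphism.

Definition lconst (a : k) : L := pseries a%:P.

Lemma lconst_is_zmod_morphism : zmod_morphism lconst.
Proof. by move=> a b; rewrite /lconst polyCB rmorphB. Qed.

Lemma lconst_is_monoid_morphism : monoid_morphism lconst.
Proof. by split=> [|a b]; rewrite /lconst ?polyCM ?rmorph1 ?rmorphM. Qed.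

HB.instance Definition _ :=
  GRing.isZmodMorphism.Build _ _ lconst lconst_is_zmod_morphism.
HB.instance Definition _ :=
  GRing.isMonoidMorphism.Build _ _ lconst lconst_is_monoid_morphism.

Lemma lseries_of_polyF (p : {poly k}) : lseries_of (polyF p) = pseries p.
Proof. by rewrite /lseries_of /polyF frac_lift_tofrac. Qed.

Definition kgraph n m (M : 'M[k]_(n, m)) (c : 'rV[k]_m) : rel_mx L n m :=
  fun U V => V = U *m map_mx lconst M + map_mx lconst c.

Definition ldelay : rel_mx L 1 1 := fun U V => V = pseries 'X *: U.

Fixpoint lsem n m (c : circ k n m) : rel_mx L n m :=
  match c in circ _ n m return rel_mx L n m with
  | CCopy => kgraph (const_mx 1) 0
  | CDisc => kgraph 0 0
  | CAmp r => kgraph r%:M 0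
  | CReg => ldelay
  | CAdd => kgraph (const_mx 1) 0
  | CZero => kgraph 0 0
  | COne => kgraph 0 (const_mx 1)
  | CCopyOp => rel_flip (kgraph (const_mx 1) 0)
  | CDiscOp => rel_flip (kgraph 0 0)
  | CAmpOp r => rel_flip (kgraph r%:M 0)
  | CRegOp => rel_flip ldelay
  | CAddOp => rel_flip (kgraph (const_mx 1) 0)
  | CZeroOp => rel_flip (kgraph 0 0)
  | COneOp => rel_flip (kgraph 0 (const_mx 1))
  | CId0 => kgraph 0 0
  | CId1 => kgraph 1%:M 0
  | CSw => kgraph (swap_mx k) 0
  | CSeq _ _ _ c d => rel_seq (lsem c) (lsem d)
  | CPar _ _ _ _ c d => rel_par (lsem c) (lsem d)
  end.

Lemma affine_span_kgraph n m (S : rel_mx K n m) M c :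
  (forall u v, S u v <-> v = u *m map_mx kx_const M + map_mx kx_const c) ->
  affine_span lseries_of S (kgraph M c).
Proof.
move=> /(affine_span_graph lseries_of) [S_aff SR]; split => // U V.
have const_lseries_of : lseries_of \o kx_const =1 lconst.
  by move=> a /=; rewrite lseries_of_polyF.
by rewrite SR /kgraph -!map_mx_comp !(eq_map_mx _ const_lseries_of).
Qed.

Lemma affine_span_delay : affine_span lseries_of (denot (@CReg k)) ldelay.
Proof.
have /(affine_span_graph lseries_of) [S_aff SR] :
    forall u v, denot (@CReg k) u v <-> v = u *m (polyF 'X)%:M + 0.
  by move=> u v; rewrite addr0 mul_mx_scalar.
split => // U V; rewrite SR /ldelay map_scalar_mx map_mx0 addr0 mul_mx_scalar /=.
by rewrite frac_lift_tofrac.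
Qed.

Lemma affine_span_denot n m (c : circ k n m) : affine_span lseries_of (denot c) (lsem c).
Proof.
have copy : affine_span lseries_of (denot (@CCopy k)) (lsem (@CCopy k)).
  by apply: affine_span_kgraph => u v /=; rewrite map_const_mx rmorph1 map_mx0 addr0 copy_mxE.
have disc : affine_span lseries_of (denot (@CDisc k)) (lsem (@CDisc k)).
  by apply: affine_span_kgraph => u v /=; rewrite !map_mx0 mulmx0 addr0 thinmx0.
have amp r : affine_span lseries_of (denot (CAmp r)) (lsem (CAmp r)).
  by apply: affine_span_kgraph => u v /=; rewrite map_scalar_mx map_mx0 addr0 mul_mx_scalar.
have add : affine_span lseries_of (denot (@CAdd k)) (lsem (@CAdd k)).
  by apply: affine_span_kgraph => u v /=; rewrite map_const_mx rmorph1 map_mx0 addr0 add_mxE.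
have zero : affine_span lseries_of (denot (@CZero k)) (lsem (@CZero k)).
  by apply: affine_span_kgraph => u v /=; rewrite !map_mx0 mulmx0 addr0.
have one : affine_span lseries_of (denot (@COne k)) (lsem (@COne k)).
  by apply: affine_span_kgraph => u v /=; rewrite map_mx0 mulmx0 add0r map_const_mx rmorph1.
elim: c => [||r|||||||r||||||||n' m' l c IHc d IHd|n1 m1 n2 m2 c IHc d IHd].
- exact: copy.
- exact: disc.
- exact: amp.
- exact: affine_span_delay.
- exact: add.
- exact: zero.
- exact: one.
- exact: affine_span_flip copy.
- exact: affine_span_flip disc.
- exact: affine_span_flip (amp r).
- exact: affine_span_flip affine_span_delay.
- exact: affine_span_flip add.
- exact: affine_span_flip zero.
- exact: affine_span_flip one.
- by apply: affine_span_kgraph => u v /=; rewrite !map_mx0 mulmx0 addr0 thinmx0.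
- by apply: affine_span_kgraph => u v /=; rewrite map_mx1 map_mx0 addr0 mulmx1.
- by apply: affine_span_kgraph => u v /=; rewrite map_swap_mx map_mx0 addr0 swap_mxE.
- exact: affine_span_seq IHc IHd.
- exact: affine_span_par IHc IHd.
Qed.

End CircuitSeries.

Arguments lconst {k}.
Arguments ldelay {k}.

Section Coefficients.
Variable k : fieldType.
Local Notation L := (lseries k).

Lemma lcoefD (x y : L) i : (x + y) i = x i + y i.
Proof. by []. Qed.

Lemma lcoefM (x y : L) i : (x * y) i = lmul x y i.
Proof. by []. Qed.

Lemma lcoef_sum (I : finType) (F : I -> L) i : (\sum_j F j) i = \sum_j F j i.
Proof. by apply: (big_morph (fun x : L => x i)) => //; apply: lcoef0. Qed.

Lemma lcoef_lconst (a : k) i : lconst a i = a * one_at k i.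
Proof. by case: i => [[|i]|i]; rewrite /= /one_at ?coefC /= ?mulr1 ?mulr0. Qed.

Lemma lcoefCM (a : k) (x : L) i : (lconst a * x) i = a * x i.
Proof.
have [B x0] := lcoefP x; have a0 := pcoef_vanish_below a%:P.
have [lti|[m ->]] := lt_or_addn i (0 + B).
  by rewrite /= (lmul_eq0 a0 x0) // x0 ?mulr0 //; rewrite add0r in lti.
rewrite /= (lmul_coefM (M := m.+1) a0 x0) // ltrunc_pcoef; last by rewrite size_polyC; case: eqP.
by rewrite coefCM coef_poly ltnSn add0r.
Qed.

Lemma lcoefXM (x : L) i : (pseries 'X * x) i = x (i - 1).
Proof.
have [B x0] := lcoefP x; have X0 := pcoef_vanish_below (k := k) 'X.
have [lti|[m ->]] := lt_or_addn i (0 + B).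
  by rewrite /= (lmul_eq0 X0 x0) // x0 //; rewrite add0r in lti; lia.
rewrite /= (lmul_coefM (M := m.+2) X0 x0) // ltrunc_pcoef ?size_polyX //.
rewrite coefXM add0r; case: m => [|m] /=; first by rewrite x0 //; lia.
by rewrite coef_poly; case: ltnP => h; [congr (x _) | ]; lia.
Qed.

Definition coef_row n (U : 'rV[L]_n) (i : int) : 'rV[k]_n := \row_j U 0 j i.

Lemma coef_row_inj n (U V : 'rV[L]_n) : (forall i, coef_row U i = coef_row V i) -> U = V.
Proof.
move=> eqUV; apply/rowP => j; apply/lseries_inj/funext => i.
by have /rowP /(_ j) := eqUV i; rewrite !mxE.
Qed.

Lemma coef_row_kgraph n m (M : 'M[k]_(n, m)) (c : 'rV[k]_m) (U : 'rV[L]_n) i :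
  coef_row (U *m map_mx lconst M + map_mx lconst c) i =
  coef_row U i *m M + one_at k i *: c.
Proof.
apply/rowP => j; rewrite !mxE lcoefD lcoef_sum lcoef_lconst mulrC; congr (_ + _).
by apply: eq_bigr => l _; rewrite !mxE mulrC lcoefCM mulrC.
Qed.

Lemma coef_row_delay (U : 'rV[L]_1) i :
  coef_row (pseries 'X *: U) i = coef_row U (i - 1).
Proof. by apply/rowP => j; rewrite !mxE lcoefXM. Qed.

Lemma kgraph_coef_row n m (M : 'M[k]_(n, m)) (c : 'rV[k]_m) U V :
  kgraph M c U V <-> forall i, coef_row V i = coef_row U i *m M + one_at k i *: c.
Proof.
split=> [-> i | eqV]; first exact: coef_row_kgraph.
by apply: coef_row_inj => i; rewrite coef_row_kgraph.
Qed.

Lemma ldelay_coef_row U V : ldelay U V <-> forall i, coef_row V i = coef_row U (i - 1).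
Proof.
split=> [-> i | eqV]; first exact: coef_row_delay.
by apply: coef_row_inj => i; rewrite coef_row_delay.
Qed.

End Coefficients.

Section Runs.
Variables (k : fieldType) (S : Type) (s0 : S).

Definition eventually0 n m (sigma : trajectory k n m) :=
  exists t, forall i, i < t -> sigma i = (0, 0).

Definition runs_from n m (stp : int -> S -> 'rV[k]_n -> 'rV[k]_m -> S -> Prop)
    (sigma : trajectory k n m) (t : int) :=
  exists st : int -> S, st t = s0 /\
    (forall i, t <= i -> stp i (st i) (sigma i).1 (sigma i).2 (st (i + 1))) /\
    (forall i, i < t -> sigma i = (0, 0)).

Definition runs n m (stp : int -> S -> 'rV[k]_n -> 'rV[k]_m -> S -> Prop)
    (sigma : trajectory k n m) :=
  exists2 t, t <= 0 & runs_from stp sigma t.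

Definition flip_step n m (stp : int -> S -> 'rV[k]_n -> 'rV[k]_m -> S -> Prop) :=
  fun i s v u s' => stp i s u v s'.

Definition flip_traj n m (sigma : trajectory k n m) : trajectory k m n :=
  fun i => ((sigma i).2, (sigma i).1).

Lemma runs_from_le n m stp (sigma : trajectory k n m) t t' :
  (forall i, i < 0 -> stp i s0 0 0 s0) -> t' <= t -> t <= 0 ->
  runs_from stp sigma t -> runs_from stp sigma t'.
Proof.
move=> idle le_t't le_t0 [st [st0 [run zero]]].
exists (fun i => if i < t then s0 else st i); split.
  by case: ifP => // /negbT nlt_t't; have -> : t' = t by lia.
split=> [i le_t'i | i lti]; last by apply: zero; lia.
case: (ltrP i t) => [ltit | leti]; last by rewrite ifF //; [exact: run | lia].
rewrite zero //; case: ifP => [_ | /negbT]; first by apply: idle; lia.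
move=> nlt; have -> : i + 1 = t by lia.
by rewrite st0; apply: idle; lia.
Qed.

Lemma runs_stateless n m stp (P : int -> 'rV[k]_n -> 'rV[k]_m -> Prop) sigma :
  (forall i s u v s', stp i s u v s' <-> P i u v) -> (forall i, i < 0 -> P i 0 0) ->
  runs stp sigma <-> eventually0 sigma /\ forall i, P i (sigma i).1 (sigma i).2.
Proof.
move=> stpP P0; split=> [[t le_t0 [st [_ [run zero]]]] | [[t zero] sigmaP]].
  split; first by exists t.
  move=> i; case: (ltrP i t) => [ltit | leti]; last exact/stpP/(run i leti).
  by rewrite (zero i ltit); apply: P0; lia.
exists (Num.min t 0); first by rewrite ge_min lexx orbT.
exists (fun _ => s0); split => //; split => [i _ | i lti]; first exact/stpP.
by apply: zero; move: lti; rewrite lt_min => /andP[].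
Qed.

Lemma runs_flip n m stp (sigma : trajectory k n m) :
  runs (flip_step stp) (flip_traj sigma) <-> runs stp sigma.
Proof.
split=> -[t le_t0 [st [st0 [run zero]]]]; exists t => //; exists st; split => //.
  split => // i lti; have := zero i lti; rewrite /flip_traj.
  by case: (sigma i) => u v [-> ->].
by split => // i lti; rewrite /flip_traj zero.
Qed.

End Runs.

Lemma one_at_lt0 (k : fieldType) i : i < 0 -> one_at k i = 0.
Proof. by move=> lti0; rewrite /one_at ifF //; lia. Qed.

Lemma const_mx11 (R : Type) (u : 'M[R]_1) : const_mx (u 0 0) = u.
Proof. by apply/matrixP => i j; rewrite mxE !ord1. Qed.

Definition delay_step (k : fieldType) (i : int) (b : k) (u v : 'rV[k]_1) (b' : k) :=
  v = const_mx b /\ b' = u 0 0.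

Lemma runs_delay (k : fieldType) (sigma : trajectory k 1 1) :
  runs 0 (@delay_step k) sigma <->
  eventually0 sigma /\ forall i, (sigma i).2 = (sigma (i - 1)).1.
Proof.
split=> [[t le_t0 [st [st0 [run zero]]]] | [[t zero] delayed]].
  split; first by exists t.
  have stE i : t <= i -> st i = (sigma (i - 1)).1 0 0.
    move=> leti; case: (ltrP t i) => ltti.
      by have [_] := run (i - 1) ltac:(lia); rewrite subrK => ->.
    have -> : i = t by lia.
    by rewrite st0 zero ?mxE //; lia.
  move=> i; case: (ltrP i t) => [ltit | leti].
    by rewrite !zero //; lia.
  by have [-> _] := run i leti; rewrite stE // const_mx11.
exists (Num.min t 0); first by rewrite ge_min lexx orbT.
exists (fun i => (sigma (i - 1)).1 0 0); split.
  by rewrite zero ?mxE //; move: (ge_min t t 0); rewrite lexx /=; lia.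
split=> [i _ | i lti]; first by rewrite /delay_step delayed addrK const_mx11.
by apply: zero; move: lti; rewrite lt_min => /andP[].
Qed.

(** * Operational semantics of circuits *)

Section CircuitRuns.
Variable k : fieldType.

Lemma op_semE n m (c : circ k n m) sigma :
  op_sem c sigma <-> runs (init c) (fun i => @step k i _ _ c) sigma.
Proof.
by split=> [[t [st [le_t0 run]]] | [t le_t0 [st run]]]; [exists t => //; exists st | exists t, st].
Qed.

Lemma step_idle n m (c : circ k n m) i : i < 0 -> @step k i _ _ c (init c) 0 0 (init c).
Proof.
move=> lti0; elim: c => /=; rewrite ?one_at_lt0 //.
all: try by move=> r; rewrite scaler0.
all: try by move=> n' m' l c IHc d IHd; exists 0.
all: try by move=> n1 m1 n2 m2 c IHc d IHd; rewrite !linear0.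
all: by try split; try apply/rowP => j; rewrite !mxE ?addr0.
Qed.

Lemma op_sem_common_start n1 m1 n2 m2 (c : circ k n1 m1) (d : circ k n2 m2)
    sigma1 sigma2 :
  op_sem c sigma1 -> op_sem d sigma2 ->
  exists2 t, t <= 0 & runs_from (init c) (fun i => @step k i _ _ c) sigma1 t /\
                      runs_from (init d) (fun i => @step k i _ _ d) sigma2 t.
Proof.
move=> /op_semE [tc le_tc0 runc] /op_semE [td le_td0 rund].
have le_tc : Num.min tc td <= tc by rewrite ge_min lexx.
have le_td : Num.min tc td <= td by rewrite ge_min lexx orbT.
exists (Num.min tc td); first exact: le_trans le_tc le_tc0.
by split; [exact: runs_from_le (step_idle c) le_tc le_tc0 runc
          | exact: runs_from_le (step_idle d) le_td le_td0 rund].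
Qed.

Lemma op_sem_seq n m l (c : circ k n m) (d : circ k m l) sigma :
  op_sem (CSeq c d) sigma <-> exists W : int -> 'rV[k]_m,
    op_sem c (fun i => ((sigma i).1, W i)) /\ op_sem d (fun i => (W i, (sigma i).2)).
Proof.
split=> [[t [st [le_t0 [st0 [run zero]]]]] | [W [opc /(op_sem_common_start opc)]]].
  have mid i : {w | (t <= i -> @step k i _ _ c (st i).1 (sigma i).1 w (st (i + 1)).1 /\
                              @step k i _ _ d (st i).2 w (sigma i).2 (st (i + 1)).2) /\
                    (i < t -> w = 0)}.
    apply: cid; case: (lerP t i) => leti; last by exists 0.
    by have [w ?] := run i leti; exists w; split => // /(lt_le_trans leti); rewrite ltxx.
  exists (fun i => sval (mid i)); split.
    exists t, (fun i => (st i).1); split => //; split; first by rewrite st0.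
    split=> i hi; have [midP mid0] := svalP (mid i); first by case: (midP hi).
    by rewrite mid0 // zero.
  exists t, (fun i => (st i).2); split => //; split; first by rewrite st0.
  split=> i hi; have [midP mid0] := svalP (mid i); first by case: (midP hi).
  by rewrite mid0 // zero.
move=> [t le_t0 [[stc [stc0 [runc zeroc]]] [std [std0 [rund zerod]]]]].
exists t, (fun i => (stc i, std i)); split => //.
split; first by rewrite /= stc0 std0.
split=> [i lei | i lti]; first by exists (W i); split; [exact: runc | exact: rund].
by have := zeroc i lti; have := zerod i lti; case: (sigma i) => u v /= [_ ->] [-> _].
Qed.

Lemma op_sem_par n1 m1 n2 m2 (c : circ k n1 m1) (d : circ k n2 m2) sigma :
  op_sem (CPar c d) sigma <->
  op_sem c (fun i => (lsubmx (sigma i).1, lsubmx (sigma i).2)) /\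
  op_sem d (fun i => (rsubmx (sigma i).1, rsubmx (sigma i).2)).
Proof.
split=> [[t [st [le_t0 [st0 [run zero]]]]] | [opc /(op_sem_common_start opc)]].
  split; [exists t, (fun i => (st i).1) | exists t, (fun i => (st i).2)];
    (split => //; split; first by rewrite st0);
    by split=> i hi; [case: (run i hi) | rewrite zero // /= linear0 linear0].
move=> [t le_t0 [[stc [stc0 [runc zeroc]]] [std [std0 [rund zerod]]]]].
exists t, (fun i => (stc i, std i)); split => //.
split; first by rewrite /= stc0 std0.
split=> [i lei | i lti]; first by split; [exact: runc | exact: rund].
have := zeroc i lti; have := zerod i lti; case: (sigma i) => u v /= [ur vr] [ul vl].
by rewrite -[u]hsubmxK -[v]hsubmxK ul vl ur vr !row_mx0.
Qed.

End CircuitRuns.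

Section Trajectories.
Variable k : fieldType.
Local Notation L := (lseries k).

Definition ltraj n m (U : 'rV[L]_n) (V : 'rV[L]_m) : trajectory k n m :=
  kappa (fun j => U 0 j) (fun j => V 0 j).

Lemma ltrajE n m (U : 'rV[L]_n) (V : 'rV[L]_m) i :
  ltraj U V i = (coef_row U i, coef_row V i).
Proof. by []. Qed.

Lemma coef_row_eventually0 n (U : 'rV[L]_n) :
  exists t, forall i, i < t -> coef_row U i = 0.
Proof.
pose b j := lbound (U 0 j); exists (- \sum_j `|b j|) => i lti.
apply/rowP => j; rewrite !mxE; apply: (lboundP (lcoefP (U 0 j))).
have : `|b j| <= \sum_l `|b l| by rewrite (bigD1 j) //= lerDl sumr_ge0.
have : - `|b j| <= b j by apply: lerNnormlW.
by rewrite -/(b j); lia.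
Qed.

Lemma eventually0_ltraj n m (sigma : trajectory k n m) :
  eventually0 sigma <-> exists U V, sigma = ltraj U V.
Proof.
split=> [[t zero] | [U [V ->]]].
  have lau j : laurent (fun i => (sigma i).1 0 j) by exists t => i lti; rewrite zero // mxE.
  have lav j : laurent (fun i => (sigma i).2 0 j) by exists t => i lti; rewrite zero // mxE.
  exists (\row_j LSeries (lau j)), (\row_j LSeries (lav j)); apply/funext => i.
  by rewrite ltrajE [LHS]surjective_pairing; congr pair; apply/rowP => j; rewrite !mxE.
have [[tU U0] [tV V0]] := (coef_row_eventually0 U, coef_row_eventually0 V).
exists (Num.min tU tV) => i; rewrite lt_min => /andP[ltU ltV].
by rewrite ltrajE U0 ?V0.
Qed.

Definition ltraj_image n m (R : rel_mx L n m) (P : trajectory k n m -> Prop) :=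
  forall sigma, P sigma <-> exists U V, R U V /\ sigma = ltraj U V.

Lemma ltraj_image_eventually0 n m (R : rel_mx L n m) (Q : trajectory k n m -> Prop) :
  (forall U V, R U V <-> Q (ltraj U V)) ->
  ltraj_image R (fun sigma => eventually0 sigma /\ Q sigma).
Proof.
move=> RQ sigma; split=> [[/eventually0_ltraj [U [V ->]] /RQ RUV] | [U [V [/RQ QUV ->]]]].
  by exists U, V.
by split => //; apply/eventually0_ltraj; exists U, V.
Qed.

Lemma ltraj_image_flip S (s0 : S) n m stp (R : rel_mx L n m) :
  ltraj_image R (runs s0 stp) -> ltraj_image (rel_flip R) (runs s0 (flip_step stp)).
Proof.
move=> img sigma; have flipK : flip_traj (flip_traj sigma) = sigma.
  by apply/funext => i; rewrite /flip_traj -surjective_pairing.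
have := runs_flip s0 stp (flip_traj sigma); rewrite flipK => ->.
rewrite img; split=> [[U [V [RUV eq_sigma]]] | [V [U [RUV ->]]]]; last by exists U, V.
by exists V, U; rewrite -flipK eq_sigma.
Qed.

Lemma ltraj_image_kgraph S (s0 : S) n m stp (M : 'M[k]_(n, m)) (c : 'rV[k]_m) :
  (forall i s u v s', stp i s u v s' <-> v = u *m M + one_at k i *: c) ->
  ltraj_image (kgraph M c) (runs s0 stp).
Proof.
move=> stpP sigma.
have idle i : i < 0 -> (0 : 'rV_m) = 0 *m M + one_at k i *: c.
  by move=> lti0; rewrite one_at_lt0 // scale0r mul0mx addr0.
rewrite (runs_stateless s0 sigma stpP idle).
apply: (ltraj_image_eventually0
  (Q := fun sigma => forall i, (sigma i).2 = (sigma i).1 *m M + one_at k i *: c)).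
exact: kgraph_coef_row.
Qed.

Lemma ltraj_image_delay : ltraj_image ldelay (runs 0 (@delay_step k)).
Proof.
move=> sigma; rewrite runs_delay.
apply: (ltraj_image_eventually0 (Q := fun sigma => forall i, (sigma i).2 = (sigma (i - 1)).1)).
exact: ldelay_coef_row.
Qed.

End Trajectories.

Section OperationalSeries.
Variable k : fieldType.
Local Notation L := (lseries k).

Lemma coef_row_lsubmx n1 n2 (U : 'rV[L]_(n1 + n2)) i :
  coef_row (lsubmx U) i = lsubmx (coef_row U i).
Proof. by apply/rowP => j; rewrite !mxE. Qed.

Lemma coef_row_rsubmx n1 n2 (U : 'rV[L]_(n1 + n2)) i :
  coef_row (rsubmx U) i = rsubmx (coef_row U i).
Proof. by apply/rowP => j; rewrite !mxE. Qed.

Lemma coef_row_row_mx n1 n2 (U1 : 'rV[L]_n1) (U2 : 'rV[L]_n2) i :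
  coef_row (row_mx U1 U2) i = row_mx (coef_row U1 i) (coef_row U2 i).
Proof. by apply/rowP => j; rewrite !mxE; case: splitP => j' _; rewrite mxE. Qed.

Lemma op_sem_runs_image n m (c : circ k n m) (R : rel_mx L n m) :
  ltraj_image R (runs (init c) (fun i => @step k i _ _ c)) -> ltraj_image R (op_sem c).
Proof. by move=> img sigma; rewrite op_semE. Qed.

Lemma ltraj_image_seq n m l (c : circ k n m) (d : circ k m l) R Q :
  ltraj_image R (op_sem c) -> ltraj_image Q (op_sem d) ->
  ltraj_image (rel_seq R Q) (op_sem (CSeq c d)).
Proof.
move=> IHc IHd sigma; rewrite op_sem_seq; split.
  move=> [W [/IHc [U [W1 [RUW1 eq1]]] /IHd [W2 [V [RW2V eq2]]]]].
  have coefW i : W i = coef_row W1 i /\ W i = coef_row W2 i.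
    exact: conj (congr1 (fun s => (s i).2) eq1) (congr1 (fun s => (s i).1) eq2).
  have eqW : W1 = W2 by apply: coef_row_inj => i; have [<- <-] := coefW i.
  exists U, V; split; first by exists W1; rewrite {2}eqW.
  apply/funext => i; rewrite ltrajE.
  have e1 : (sigma i).1 = coef_row U i := congr1 (fun s => (s i).1) eq1.
  have e2 : (sigma i).2 = coef_row V i := congr1 (fun s => (s i).2) eq2.
  by rewrite -e1 -e2 -surjective_pairing.
move=> [U [V [[W [RUW QWV]] ->]]]; exists (coef_row W).
by split; [apply/IHc; exists U, W | apply/IHd; exists W, V].
Qed.

Lemma ltraj_image_par n1 m1 n2 m2 (c : circ k n1 m1) (d : circ k n2 m2) R Q :
  ltraj_image R (op_sem c) -> ltraj_image Q (op_sem d) ->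
  ltraj_image (rel_par R Q) (op_sem (CPar c d)).
Proof.
move=> IHc IHd sigma; rewrite op_sem_par; split.
  move=> [/IHc [U1 [V1 [R1 eq1]]] /IHd [U2 [V2 [Q2 eq2]]]].
  exists (row_mx U1 U2), (row_mx V1 V2).
  split; first by split; rewrite ?row_mxKl ?row_mxKr.
  apply/funext => i; rewrite ltrajE.
  have [el1 el2] : lsubmx (sigma i).1 = coef_row U1 i /\ lsubmx (sigma i).2 = coef_row V1 i.
    exact: conj (congr1 (fun s => (s i).1) eq1) (congr1 (fun s => (s i).2) eq1).
  have [er1 er2] : rsubmx (sigma i).1 = coef_row U2 i /\ rsubmx (sigma i).2 = coef_row V2 i.
    exact: conj (congr1 (fun s => (s i).1) eq2) (congr1 (fun s => (s i).2) eq2).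
  by rewrite !coef_row_row_mx -el1 -er1 -el2 -er2 !hsubmxK -surjective_pairing.
move=> [U [V [[R1 Q2] ->]]]; split.
  apply/IHc; exists (lsubmx U), (lsubmx V); split => //.
  by apply/funext => i; rewrite !ltrajE !coef_row_lsubmx.
apply/IHd; exists (rsubmx U), (rsubmx V); split => //.
by apply/funext => i; rewrite !ltrajE !coef_row_rsubmx.
Qed.

Lemma op_sem_lsem n m (c : circ k n m) : ltraj_image (lsem c) (op_sem c).
Proof.
have copy : ltraj_image (lsem (@CCopy k)) (runs tt (fun i => @step k i _ _ (@CCopy k))).
  by apply: ltraj_image_kgraph => i s u v s' /=; rewrite scaler0 addr0 copy_mxE.
have disc : ltraj_image (lsem (@CDisc k)) (runs tt (fun i => @step k i _ _ (@CDisc k))).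
  by apply: ltraj_image_kgraph => i s u v s' /=; rewrite mulmx0 scaler0 addr0 thinmx0.
have amp r : ltraj_image (lsem (CAmp r)) (runs tt (fun i => @step k i _ _ (CAmp r))).
  by apply: ltraj_image_kgraph => i s u v s' /=; rewrite scaler0 addr0 mul_mx_scalar.
have add : ltraj_image (lsem (@CAdd k)) (runs tt (fun i => @step k i _ _ (@CAdd k))).
  by apply: ltraj_image_kgraph => i s u v s' /=; rewrite scaler0 addr0 add_mxE.
have zero : ltraj_image (lsem (@CZero k)) (runs tt (fun i => @step k i _ _ (@CZero k))).
  by apply: ltraj_image_kgraph => i s u v s' /=; rewrite mulmx0 scaler0 addr0.
have one : ltraj_image (lsem (@COne k)) (runs tt (fun i => @step k i _ _ (@COne k))).
  apply: ltraj_image_kgraph => i s u v s' /=; rewrite mulmx0 add0r.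
  by rewrite (_ : one_at k i *: _ = const_mx (one_at k i)) //; apply/rowP => j; rewrite !mxE mulr1.
elim: c => [||r|||||||r||||||||n' m' l c IHc d IHd|n1 m1 n2 m2 c IHc d IHd].
1-17: apply: op_sem_runs_image.
- exact: copy.
- exact: disc.
- exact: amp r.
- exact: ltraj_image_delay.
- exact: add.
- exact: zero.
- exact: one.
- exact (ltraj_image_flip copy).
- exact (ltraj_image_flip disc).
- exact (ltraj_image_flip (amp r)).
- exact (ltraj_image_flip (@ltraj_image_delay k)).
- exact (ltraj_image_flip add).
- exact (ltraj_image_flip zero).
- exact (ltraj_image_flip one).
- by apply: ltraj_image_kgraph => i s u v s' /=; rewrite mulmx0 scaler0 addr0 thinmx0.
- by apply: ltraj_image_kgraph => i s u v s' /=; rewrite scaler0 addr0 mulmx1.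
- by apply: ltraj_image_kgraph => i s u v s' /=; rewrite scaler0 addr0 swap_mxE.
- exact: ltraj_image_seq.
- exact: ltraj_image_par.
Qed.

End OperationalSeries.

Section IotaKappa.
Variables (k : fieldType) (n m : nat) (S : krel k n m).

Lemma iota_rel_affine_ext u v : iota_rel S u v ->
  exists U V, affine_ext lseries_of S U V /\ kappa u v = ltraj U V.
Proof.
have embE (x : kx k) e : embR x e -> e = lseries_of x by move/embR_lseries_of.
move=> [a1 [a2 [Sa [N [lam [l1 [l2 [lam_laurent [l_dir [e1 [e2 [f1 [f2
  [emb_e1 [emb_e2 [emb_f1 [emb_f2 [-> ->]]]]]]]]]]]]]]]]]].
pose D1 := \matrix_(i < N) l1 i; pose D2 := \matrix_(i < N) l2 i.
pose Lam := \row_(i < N) LSeries (lam_laurent i).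
exists (map_mx lseries_of a1 + Lam *m map_mx lseries_of D1),
       (map_mx lseries_of a2 + Lam *m map_mx lseries_of D2); split.
  exists a1, a2; split => //; exists N, D1, D2, Lam; split => // i.
  rewrite !rowK; have [s1 [s2 [Ss [-> ->]]]] := l_dir i.
  by rewrite (addrC a1) (addrC a2) !subrK.
apply/funext => t; rewrite ltrajE; congr pair; apply/rowP => j;
  rewrite !mxE /lcomb lcoefD lcoef_sum; congr (_ + _).
- by rewrite (embE _ _ (emb_e1 j)).
- by apply: eq_bigr => l _; rewrite !mxE lcoefM (embE _ _ (emb_f1 l j)).
- by rewrite (embE _ _ (emb_e2 j)).
- by apply: eq_bigr => l _; rewrite !mxE lcoefM (embE _ _ (emb_f2 l j)).
Qed.

Lemma affine_ext_iota_rel U V : affine_ext lseries_of S U V ->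
  iota_rel S (fun j => lcoef (U 0 j)) (fun j => lcoef (V 0 j)).
Proof.
move=> [a1 [a2 [Sa [N [D1 [D2 [lam [SD [eqU eqV]]]]]]]]].
exists a1, a2; split => //.
exists N, (fun i => lcoef (lam 0 i)), (fun i => row i D1), (fun i => row i D2).
split; first by move=> i; apply: lcoefP.
split.
  move=> i; exists (a1 + row i D1), (a2 + row i D2).
  by split; [apply: SD | rewrite !(addrC a1, addrC a2) !addrK].
exists (fun j => lseries_of (a1 0 j)), (fun j => lseries_of (a2 0 j)),
  (fun i j => lseries_of (row i D1 0 j)), (fun i j => lseries_of (row i D2 0 j)).
do 2 (split; first by move=> j; apply/embR_lseries_of).
do 2 (split; first by move=> i j; apply/embR_lseries_of).
by split; apply/funext => j; apply/funext => t;
  rewrite ?eqU ?eqV !mxE /lcomb lcoefD lcoef_sum;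
  congr (_ + _); apply: eq_bigr => l _; rewrite !mxE lcoefM.
Qed.

Lemma kappa_set_iota_rel : ltraj_image (affine_ext lseries_of S) (kappa_set (iota_rel S)).
Proof.
move=> sigma; split=> [[u [v [/iota_rel_affine_ext [U [V [SUV ->]]] ->]]] | [U [V [SUV ->]]]].
  by exists U, V.
by exists (fun j => lcoef (U 0 j)), (fun j => lcoef (V 0 j)); split; first exact: affine_ext_iota_rel.
Qed.

End IotaKappa.

Theorem theorem3 (k : fieldType) (n m : nat) (c : circ k n m) :
  op_sem c = kappa_set (iota_rel (denot c)).
Proof.
apply/funext => sigma; apply/propext.
rewrite op_sem_lsem kappa_set_iota_rel.
have [_ ext_lsem] := affine_span_denot c.
by split=> -[U [V [? ->]]]; exists U, V; split => //; apply/ext_lsem.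
Qed.
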